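(* Let $\mathcal{L}=(n,\mathcal{M},\mathcal{C})$ be a simple linearization. If $G(D(\mathcal{L}))$ is acyclic, then the system $0\le y_m\le1$ ($m\in\mathcal{M}$), $y_{\bigcup c}\le y_m$ ($c\in\mathcal{C}$, $m\in c$), $\sum_{m\in c}y_m\le y_{\bigcup c}+|c|-1$ ($c\in\mathcal{C}$) is totally dual integral.
   Context: $[n]=\{1,\dots,n\}$; a monomial is a nonempty subset of $[n]$; $\mathcal{S}=\{\{i\}:i\in[n]\}$. A linearization is a triple $\mathcal{L}=(n,\mathcal{M},\mathcal{C})$, where $\mathcal{M}$ is a set of monomials with $\mathcal{S}\subseteq\mathcal{M}$ and $\mathcal{C}$ is a set of AND-constraints; each AND-constraint is a set $c\subseteq\mathcal{M}$ whose union $\bigcup c$ (resultant) lies in $\mathcal{M}$. $\mathcal{P}=\mathcal{M}\setminus\mathcal{S}$. Linearizations are consistent: each $m\in\mathcal{P}$ is the resultant of some $c$ with $|m'|<|m|$ for all $m'\in c$. $\mathcal{L}$ is simple if each proper monomial is the resultant of exactly one AND-constraint and $|\mathcal{C}|=|\mathcal{P}|$. $D(\mathcal{L})$ has node set $\mathcal{M}$ and, for each $c\in\mathcal{C}$, arcs from $\bigcup c$ to each $m\in c$; $G(D(\mathcal{L}))$ is its underlying undirected graph. Total dual integrality: for every integral objective with finite LP maximum, the dual has an integral optimal solution. *)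

From HB Require Import structures.
From mathcomp Require Import all_boot all_order all_algebra.
Set Implicit Arguments. Unset Strict Implicit. Unset Printing Implicit Defensive.
Import Order.TTheory GRing.Theory Num.Theory.
Local Open Scope ring_scope.

Section TDI.
Variables (V I : finType) (a : I -> V -> rat) (b : I -> rat).

Definition dotp (u y : V -> rat) : rat := \sum_(v : V) u v * y v.

Definition lp_feasible (y : V -> rat) : Prop := forall i, dotp (a i) y <= b i.

Definition lp_has_finite_max (w : V -> rat) : Prop :=
  exists2 y, lp_feasible y & forall y', lp_feasible y' -> dotp w y' <= dotp w y.

Definition dual_feasible (w : V -> rat) (lam : I -> rat) : Prop :=
  (forall i, 0 <= lam i) /\ (forall v, \sum_(i : I) lam i * a i v = w v).

Definition dual_obj (lam : I -> rat) : rat := \sum_(i : I) b i * lam i.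

Definition TDI : Prop :=
  forall w : V -> rat, (forall v, w v \is a Num.int) -> lp_has_finite_max w ->
  exists lam : I -> rat,
    [/\ dual_feasible w lam, (forall i, lam i \is a Num.int) &
        forall mu, dual_feasible w mu -> dual_obj lam <= dual_obj mu].
End TDI.

Section Linearization.
Variable n : nat.
Notation mono := {set 'I_n}.

Definition resultant (c : {set mono}) : mono := \bigcup_(m in c) m.

Definition singletons : {set mono} := [set [set i] | i : 'I_n].

Definition properM (M : {set mono}) : {set mono} := M :\: singletons.

Definition is_linearization (M : {set mono}) (C : {set {set mono}}) : Prop :=
  [/\ forall m, m \in M -> m != set0,
      singletons \subset M &
      forall c, c \in C -> c \subset M /\ resultant c \in M].

Definition consistent (M : {set mono}) (C : {set {set mono}}) : Prop :=
  forall m, m \in properM M ->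
    exists2 c, c \in C & resultant c = m /\ forall m', m' \in c -> (#|m'| < #|m|)%N.

Definition simple_lin (M : {set mono}) (C : {set {set mono}}) : Prop :=
  (forall m, m \in properM M -> #|[set c in C | resultant c == m]| = 1%N)
  /\ #|C| = #|properM M|.

Definition arcD (C : {set {set mono}}) (u v : mono) : bool :=
  [exists c in C, (resultant c == u) && (v \in c)].

Definition adjG (C : {set {set mono}}) (u v : mono) : bool :=
  arcD C u v || arcD C v u.

Definition acyclicG (M : {set mono}) (C : {set {set mono}}) : Prop :=
  forall p : seq mono, all (fun m => m \in M) p -> uniq p -> (2 < size p)%N ->
    ~~ cycle (adjG C) p.

Section System.
Variables (M : {set mono}) (C : {set {set mono}}).

Definition varT := {m : mono | m \in M}.
Definition pairT := {p : {set mono} * mono | (p.1 \in C) && (p.2 \in p.1)}.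
Definition consT := {c : {set mono} | c \in C}.
(* rows: (0 <= y_m) , (y_m <= 1) , (y_{Uc} <= y_m) , (sum y_m <= y_{Uc} + |c| - 1) *)
Definition rowT := ((varT + varT) + (pairT + consT))%type.

Definition ind (v : varT) (m : mono) : rat := (val v == m)%:R.

Definition sys_a (r : rowT) (v : varT) : rat :=
  match r with
  | inl (inl m) => - ind v (val m)
  | inl (inr m) => ind v (val m)
  | inr (inl p) => ind v (resultant (val p).1) - ind v (val p).2
  | inr (inr c) => (\sum_(m in val c) ind v m) - ind v (resultant (val c))
  end.

Definition sys_b (r : rowT) : rat :=
  match r with
  | inl (inl _) => 0
  | inl (inr _) => 1
  | inr (inl _) => 0
  | inr (inr c) => #|val c|%:R - 1
  end.
End System.
End Linearization.

From Pilot Require Import Defs.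
From HB Require Import structures.
From mathcomp Require Import all_boot all_order all_algebra.
From mathcomp Require Import ring lra.
Set Implicit Arguments. Unset Strict Implicit. Unset Printing Implicit Defensive.
Import Order.TTheory GRing.Theory Num.Theory.
Local Open Scope ring_scope.

(* For a subfamily F of the constraints and an integral weight W on the monomials we
   build an integral dual solution of the system restricted to F and a feasible point
   of the same objective value; by weak duality the dual solution is optimal, and for
   F = C this is total dual integrality. In a simple consistent linearization distinct
   constraints have distinct resultants, each larger than its members, so when G(D(L))
   is acyclic the stars {res c} U c are arranged like a tree: the constraint c whose
   resultant is the second vertex of a longest path of G has a star meeting every other
   star in at most one node x.
   The one-constraint system on the star of c is solved by hand: after replacing the
   weight of x by a suitable integer -D it has an integral dual solution and two optimal
   points, one with y_x = 0 and one with y_x = 1. The rest of F is handled by induction,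
   with D added to the weight of x. Duals are glued by addition; the primal point is the
   outer one off the star and, on the star, the convex combination of the two local
   points that takes the outer value at x. *)

Local Notation res := Defs.resultant.

Section PosNegPart.
Variable R : archiRealDomainType.
Implicit Types z : R.

Definition ppart z : R := if 0 <= z then z else 0.
Definition npart z : R := if 0 <= z then 0 else - z.

Lemma ppart_ge0 z : 0 <= ppart z.
Proof. by rewrite /ppart; case: ifP. Qed.

Lemma npart_ge0 z : 0 <= npart z.
Proof. by rewrite /npart; case: ifPn => //; rewrite -ltNge oppr_ge0 => /ltW. Qed.

Lemma ppart_int z : z \is a Num.int -> ppart z \is a Num.int.
Proof. by rewrite /ppart; case: ifP. Qed.

Lemma npart_int z : z \is a Num.int -> npart z \is a Num.int.
Proof. by rewrite /npart; case: ifP => // _ zi; rewrite rpredN. Qed.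

Lemma ppartB_npart z : ppart z - npart z = z.
Proof. by rewrite /ppart /npart; case: ifP => _; rewrite ?subr0 // sub0r opprK. Qed.

Lemma ppart_id z : 0 <= z -> ppart z = z.
Proof. by rewrite /ppart => ->. Qed.

Lemma npart_nneg z : 0 <= z -> npart z = 0.
Proof. by rewrite /npart => ->. Qed.

Lemma ppart_npos z : z <= 0 -> ppart z = 0.
Proof. by rewrite /ppart => z0; case: ifP => // z0'; apply/eqP; rewrite eq_le z0 z0'. Qed.

Lemma mulr_ind_gt0 z : z * ((0 < z)%R : bool)%:R = ppart z.
Proof.
case: ltrP => [z0|z0]; first by rewrite mulr1 ppart_id // ltW.
by rewrite mulr0 ppart_npos.
Qed.

End PosNegPart.

Lemma sum_const_but (R : pzRingType) (T : finType) (A : {set T}) j (x : R) :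
  j \in A -> \sum_(m in A | m != j) x = x * (#|A|%:R - 1).
Proof.
move=> jA; apply: (addrI x); rewrite -(bigD1 j jA) sumr_const.
by rewrite mulrBr mulr1 addrC subrK mulr_natr.
Qed.

Lemma sum_le_card_subr1 (R : numDomainType) (T : finType) (A : {set T}) (Y : T -> R) j :
  j \in A -> {in A, forall m, Y m <= 1} -> Y j = 0 -> \sum_(m in A) Y m <= #|A|%:R - 1.
Proof.
move=> jA Y1 Yj; rewrite (bigD1 j jA) /= Yj add0r -[_ - 1]mul1r -(sum_const_but _ jA).
by apply: ler_sum => m /andP[/Y1].
Qed.

Lemma sum_pos_off_argmin (R : archiRealDomainType) (T : finType) (A : {set T}) (W : T -> R) j :
  j \in A -> {in A, forall m, W j <= W m} ->
  \sum_(m in A) W m * ((m != j) && (0 < W m))%:R =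
  \sum_(m in A) ppart (W m - ppart (W j)) + ppart (W j) * (#|A|%:R - 1).
Proof.
move=> jA jmin; rewrite (bigD1 j jA) [X in _ = X + _](bigD1 j jA) /= eqxx mulr0 add0r.
case: (lerP (W j) 0) => [Wj_le0|Wj_gt0].
  rewrite (ppart_npos Wj_le0) !subr0 (ppart_npos Wj_le0) mul0r add0r addr0.
  by apply: eq_bigr => m /andP[_ ->]; rewrite subr0 mulr_ind_gt0.
rewrite (ppart_id (ltW Wj_gt0)) subrr (ppart_npos (lexx 0)) add0r.
have W_gt0 m : m \in A -> 0 < W m by move=> mA; apply: lt_le_trans Wj_gt0 (jmin m mA).
rewrite (eq_bigr (fun m => W m)) => [|m /andP[/W_gt0 -> ->]]; last by rewrite mulr1.
rewrite [in RHS](eq_bigr (fun m => W m - W j)) => [|m /andP[mA _]]; last first.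
  by rewrite ppart_id // subr_ge0 jmin.
by rewrite sumrB sum_const_but // addrNK.
Qed.

Lemma ex_argmin disp (R : orderType disp) (T : finType) (A : {set T}) (F : T -> R) :
  A != set0 -> exists2 j, j \in A & {in A, forall i, (F j <= F i)%O}.
Proof. by case/set0Pn => i0 /(arg_minP F) [j jA jmin]; exists j. Qed.

Lemma sum_restrict (R : nmodType) (T : finType) (S N : {set T}) (G : T -> R) :
  S \subset N -> \sum_(m in N) (if m \in S then G m else 0) = \sum_(m in S) G m.
Proof.
move=> sSN; rewrite -big_mkcondr; apply: eq_bigl => m.
by case mS: (m \in S); rewrite ?andbT ?andbF ?(subsetP sSN).
Qed.

Section Convexity.
Variables (R : realDomainType) (t : R).
Hypothesis t01 : 0 <= t <= 1.

Lemma convex_01 (a b : R) : 0 <= a <= 1 -> 0 <= b <= 1 -> 0 <= (1 - t) * a + t * b <= 1.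
Proof. by case/andP: t01 => ? ? /andP[? ?] /andP[? ?]; apply/andP; split; nra. Qed.

Lemma convex_le (a b a' b' : R) :
  a <= b -> a' <= b' -> (1 - t) * a + t * a' <= (1 - t) * b + t * b'.
Proof. by case/andP: t01 => ? ? ? ?; nra. Qed.

End Convexity.

Lemma sum_sig (R : nmodType) (T : finType) (P : pred T) (F : T -> R) :
  \sum_(s : {x : T | P x}) F (val s) = \sum_(x | P x) F x.
Proof. exact: (esym (big_sub P F)). Qed.

Lemma ex_longest_seq (T : finType) (P : pred (seq T)) s0 :
  P s0 -> (forall s, P s -> uniq s) ->
  exists2 s, P s & forall s', P s' -> (size s' <= size s)%N.
Proof.
move=> Ps0 P_uniq; pose Q k := [exists t : k.-tuple T, P t].
have Qs0 : exists k, Q k by exists (size s0); apply/existsP; exists (in_tuple s0).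
have Q_bound k : Q k -> (k <= #|T|)%N.
  by case/existsP => t /P_uniq/card_uniqP; rewrite size_tuple => <-; apply: max_card.
case: (ex_maxnP Qs0 Q_bound) => k /existsP[t Pt] k_max.
exists t => // s' Ps'; rewrite size_tuple; apply: k_max; apply/existsP.
by exists (in_tuple s').
Qed.

(** * Simple consistent linearizations *)

Definition star n (c : {set {set 'I_n}}) : {set {set 'I_n}} := res c |: c.

Section SimpleLinearization.
Variables (n : nat) (M : {set {set 'I_n}}) (C : {set {set {set 'I_n}}}).
Local Notation res := (@Defs.resultant n).
Hypotheses (HL : is_linearization M C) (HC : consistent M C) (HS : simple_lin M C).

Lemma constraint_sub c : c \in C -> c \subset M.
Proof. by case: HL => _ _ H /H []. Qed.

Lemma resultant_in c : c \in C -> res c \in M.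
Proof. by case: HL => _ _ H /H []. Qed.

Lemma star_sub c : c \in C -> star c \subset M.
Proof. by move=> cC; rewrite subUset sub1set resultant_in ?constraint_sub. Qed.

Lemma resultant_proper c : c \in C -> res c \in properM M.
Proof.
case: HS => one_res cardC.
pose S := [set c in C | res c \in properM M].
have cardS : #|S| = #|C|.
  rewrite cardC -!sum1_card (partition_big res (mem (properM M))) /=; last first.
    by move=> c'; rewrite inE => /andP[].
  apply: eq_bigr => m Pm; rewrite -[RHS](one_res m Pm) -sum1_card.
  apply: eq_bigl => c'; rewrite /S.
  rewrite !inE; case: eqP => [->|_]; last by rewrite !andbF.
  by move: Pm; rewrite !inE => /andP[-> ->]; rewrite !andbT.
have SC : S \subset C by apply/subsetP => c'; rewrite inE => /andP[].
by rewrite -(subset_cardP cardS SC) inE => /andP[].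
Qed.

Lemma resultant_inj : {in C &, injective res}.
Proof.
move=> c1 c2 c1C c2C E; case: HS => one_res _.
have /eqP/cards1P[c0 Hc0] := one_res _ (resultant_proper c1C).
have : c1 \in [set c in C | res c == res c1] by rewrite inE c1C eqxx.
have : c2 \in [set c in C | res c == res c1] by rewrite inE c2C E eqxx.
by rewrite Hc0 !inE => /eqP -> /eqP ->.
Qed.

Lemma card_lt_resultant c m : c \in C -> m \in c -> (#|m| < #|res c|)%N.
Proof.
move=> cC mc; have [c' c'C [E lt_c']] := HC (resultant_proper cC).
by move: mc; rewrite -(resultant_inj c'C cC E) => /lt_c'; rewrite E.
Qed.

Lemma resultant_notin c : c \in C -> res c \notin c.
Proof. by move=> cC; apply/negP => /(card_lt_resultant cC); rewrite ltnn. Qed.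

Lemma card_constraint_gt1 c : c \in C -> (1 < #|c|)%N.
Proof.
move=> cC; rewrite ltnNge; apply/negP => /card_le1P c_le1.
case: (set_0Vmem c) => [c0|[m mc]].
  case: HL => nonempty _ _; have := nonempty _ (resultant_in cC).
  by rewrite /Defs.resultant c0 big_set0 eqxx.
have res_m : res c = m.
  rewrite /Defs.resultant (_ : c = [set m]) ?big_set1 //.
  by apply/setP => m'; rewrite in_set1 (c_le1 m mc).
by have := card_lt_resultant cC mc; rewrite res_m ltnn.
Qed.

End SimpleLinearization.

(** * A star meeting the others in a single node *)

Lemma adjG_sym n (F : {set {set {set 'I_n}}}) u v : adjG F u v = adjG F v u.
Proof. by rewrite /adjG orbC. Qed.

Lemma adjG_subset n (F C : {set {set {set 'I_n}}}) :
  F \subset C -> subrel (adjG F) (adjG C).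
Proof.
move=> sFC u v; rewrite /adjG /arcD.
by case/orP => /exists_inP[c /(subsetP sFC) cC uv]; apply/orP; [left|right];
  apply/exists_inP; exists c.
Qed.

Lemma adjG_resultant n (F : {set {set {set 'I_n}}}) c m :
  c \in F -> m \in c -> adjG F (res c) m.
Proof. by move=> cF mc; apply/orP; left; apply/exists_inP; exists c; rewrite ?eqxx. Qed.

Lemma adjGP n (F : {set {set {set 'I_n}}}) u v :
  adjG F u v ->
  exists2 c, c \in F & (res c = u /\ v \in c) \/ (res c = v /\ u \in c).
Proof.
by case/orP => /exists_inP[c cF /andP[/eqP res_c mc]]; exists c => //; [left|right].
Qed.

Section Leaf.
Variables (n : nat) (M : {set {set 'I_n}}) (C : {set {set {set 'I_n}}}).
Hypotheses (HL : is_linearization M C) (HC : consistent M C) (HS : simple_lin M C)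
  (HA : acyclicG M C).
Variable F : {set {set {set 'I_n}}}.
Hypothesis sFC : F \subset C.
Local Notation adj := (adjG F).

Lemma adjG_irr u : ~~ adj u u.
Proof.
apply/negP => /adjGP[c /(subsetP sFC) cC [] [res_c uc]];
  by move: (resultant_notin HC HS cC); rewrite res_c uc.
Qed.

Lemma adjG_in u v : adj u v -> u \in M.
Proof.
move=> /adjGP[c /(subsetP sFC) cC [[<- _]|[_ uc]]].
  exact: (resultant_in HL cC).
exact: subsetP (constraint_sub HL cC) _ uc.
Qed.

Definition simple_path (p : seq {set 'I_n}) := [&& uniq p, all (mem M) p & sorted adj p].

Lemma simple_path_cons v a p :
  simple_path [:: v, a & p] = [&& v \notin a :: p, v \in M, adj v a & simple_path (a :: p)].
Proof.
rewrite /simple_path /=.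
by case: (v \in M); case: (adj v a); case: (_ \in _); case: (_ \in _); rewrite /= ?andbF ?andbT.
Qed.

Lemma simple_path_chord a b q v : simple_path [:: a, b & q] -> v \in q -> ~~ adj v a.
Proof.
move=> sp vq; apply/negP => va; case/splitPr: vq sp => q1 q2.
have -> : [:: a, b & q1 ++ v :: q2] = (a :: b :: rcons q1 v) ++ q2 by rewrite /= cat_rcons.
rewrite /simple_path cat_uniq all_cat cat_cons => /and3P[/andP[u _] /andP[inM _]].
rewrite -[sorted adj _]/(path adj a _) cat_path => /andP[s _].
have cyc : cycle adj (a :: b :: rcons q1 v).
  rewrite /cycle rcons_path [last _ _]/= last_rcons va andbT.
  exact: s.
have := HA inM u; rewrite /= size_rcons => /(_ isT) /negP; apply.
exact: (sub_cycle (adjG_subset sFC) cyc).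
Qed.

Section LongestPath.
Variables (f : {set 'I_n}) (q : seq {set 'I_n}).
Hypothesis longest : forall p, simple_path p -> (size p <= (size q).+2)%N.

Lemma longest_adj r v : simple_path [:: r, f & q] -> adj r v -> v = f.
Proof.
move=> sp rv; have vM : v \in M by apply: adjG_in (r) _; rewrite adjG_sym.
case vp: (v \in [:: r, f & q]).
  move: vp; rewrite !in_cons => /or3P[/eqP vr|/eqP //|vq].
    by move: rv; rewrite vr (negPf (adjG_irr r)).
  by move: (simple_path_chord sp vq); rewrite adjG_sym rv.
have : simple_path [:: v, r, f & q] by rewrite simple_path_cons vp vM adjG_sym rv sp.
by move/longest; rewrite ltnn.
Qed.

Lemma longest_not_res r c : simple_path [:: r, f & q] -> c \in F -> res c != r.
Proof.
move=> sp cF; apply/eqP => res_c.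
have /card_gt1P[m1 [m2 [m1c m2c]]] := card_constraint_gt1 HL HC HS (subsetP sFC _ cF).
have memc_f m : m \in c -> m = f.
  by move=> mc; apply: (longest_adj sp); rewrite -res_c adjG_resultant.
by rewrite (memc_f m1 m1c) (memc_f m2 m2c) eqxx.
Qed.

Lemma longest_mem r c : simple_path [:: r, f & q] -> c \in F -> r \in c -> res c = f.
Proof.
move=> sp cF rc; apply: longest_adj sp _.
by rewrite adjG_sym; apply: adjG_resultant.
Qed.

Variable c : {set {set 'I_n}}.
Hypotheses (cF : c \in F) (res_c : res c = f) (sp_fq : simple_path (f :: q)).

Lemma longest_private v c' : v \in c -> v \notin q -> c' \in F -> c' != c -> v \notin star c'.
Proof.
move=> vc vq c'F c'c.
have cC := subsetP sFC _ cF.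
have sp : simple_path [:: v, f & q].
  rewrite simple_path_cons sp_fq in_cons (negPf vq) orbF (subsetP (constraint_sub HL cC)) // andbT.
  rewrite -res_c adjG_sym adjG_resultant // !andbT.
  by apply: contraNneq _ (resultant_notin HC HS cC) => <-.
rewrite in_setU1 negb_or eq_sym longest_not_res //=.
apply: contra c'c => vc'; apply/eqP.
by apply: (resultant_inj HS (subsetP sFC _ c'F) cC); rewrite res_c (longest_mem sp).
Qed.

Lemma longest_shared v : v \in q -> adj v f -> v = head v q.
Proof.
case: q sp_fq => [|g q0] //= sp; rewrite in_cons => /orP[/eqP //|vq0].
by move/negP: (simple_path_chord sp vq0).
Qed.

Lemma longest_res_shared c' :
  c' \in F -> c' != c -> f \in star c' -> f \in c' /\ res c' = head f q.
Proof.
move=> c'F c'c; have c'C := subsetP sFC _ c'F.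
rewrite in_setU1 => /orP[/eqP f_res|fc'].
  by move: c'c; rewrite (resultant_inj HS c'C (subsetP sFC _ cF)) ?eqxx // res_c.
have adj_f : adj (res c') f by apply: adjG_resultant.
split=> //; case res_q: (res c' \in q).
  by rewrite {1}(longest_shared res_q adj_f); move: res_q; case: (q).
have sp : simple_path [:: res c', f & q].
  rewrite simple_path_cons sp_fq in_cons res_q orbF adj_f (resultant_in HL c'C) !andbT.
  by apply: contraNneq _ (resultant_notin HC HS c'C) => ->.
by move: (longest_not_res sp c'F); rewrite eqxx.
Qed.

End LongestPath.

Lemma leaf_constraint : F != set0 ->
  exists c x, [/\ c \in F, x \in star c &
    forall c', c' \in F -> c' != c -> star c :&: star c' \subset [set x]].
Proof.
case/set0Pn => c0 c0F; have c0C := subsetP sFC _ c0F.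
have /card_gt0P[m0 m0c] := ltnW (card_constraint_gt1 HL HC HS c0C).
have sp0 : simple_path [:: m0; res c0].
  rewrite /simple_path /= !andbT inE adjG_sym adjG_resultant // (resultant_in HL c0C).
  rewrite (subsetP (constraint_sub HL c0C)) //= andbT.
  by apply: contraNneq _ (resultant_notin HC HS c0C) => <-.
have [p sp longest] :
    exists2 p, simple_path p & forall p', simple_path p' -> (size p' <= size p)%N.
  by apply: ex_longest_seq sp0 _ => s /andP[].
case: p sp longest (longest _ sp0) => [|e [|f q]] // sp longest _.
move: (sp); rewrite simple_path_cons => /and4P[_ _ /adjGP[c cF [[res_c _]|[res_c _]]] sp_fq].
  by move: (longest_not_res longest sp cF); rewrite res_c eqxx.
have cC := subsetP sFC _ cF.
(* The star of [c] can only meet other stars at [f = res c] or at the vertex after [f]. *)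
exists c, (if head f q \in c then head f q else f); split=> //.
  by case: ifP; rewrite in_setU1 res_c ?eqxx // => ->; rewrite orbT.
move=> c' c'F c'c; apply/subsetP => v /setIP[]; rewrite in_setU1 res_c inE.
case/orP => [/eqP -> f_star|vc vc'].
  have [fc' res_c'] := longest_res_shared longest cF res_c sp_fq c'F c'c f_star.
  case: ifP => // hc; have := card_lt_resultant HC HS cC hc.
  rewrite res_c -res_c' ltnNge ltnW //.
  exact: (card_lt_resultant HC HS (subsetP sFC _ c'F) fc').
case vq: (v \in q); last first.
  by move: vc'; rewrite (negPf (longest_private longest cF res_c sp_fq vc _ c'F c'c)) ?vq.
have adj_vf : adjG F v f by rewrite adjG_sym -res_c adjG_resultant.
move: (longest_shared sp_fq vq adj_vf) vc; case: (q) vq => //= g q0 _ -> ->.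
by rewrite eqxx.
Qed.

End Leaf.

(** * Dual certificates *)

(* Multipliers: [al m] and [be m] for [0 <= y_m] and [y_m <= 1], [ga c m] for
   [y_(res c) <= y_m] and [de c] for the sum row of [c]; [column] is the resulting
   coefficient of [y_m]. They are given for every [c], but only [c] in [F] count. *)
Section Certificates.
Variable n : nat.
Local Notation mono := {set 'I_n}.
Implicit Types (N : {set mono}) (F : {set {set mono}}) (c : {set mono}) (m x : mono).
Implicit Types (W Y al be : mono -> rat) (ga : {set mono} -> mono -> rat).
Implicit Types (de : {set mono} -> rat).

Definition column F al be ga de m : rat :=
  be m - al m + \sum_(c in F) ((res c == m)%:R * (\sum_(m' in c) ga c m' - de c)
                               + (m \in c)%:R * (de c - ga c m)).

Definition dual_value N F be de : rat :=
  \sum_(m in N) be m + \sum_(c in F) de c * (#|c|%:R - 1).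

Definition primal_value N W Y : rat := \sum_(m in N) W m * Y m.

Definition and_feasible N F Y : Prop :=
  {in N, forall m, 0 <= Y m <= 1} /\
  {in F, forall c, {in c, forall m, Y (res c) <= Y m} /\
                   \sum_(m in c) Y m - Y (res c) <= #|c|%:R - 1}.

Record dual_solution N F W al be ga de : Prop := DualSolution {
  dual_ge0 : forall c m, [/\ 0 <= al m, 0 <= be m, 0 <= ga c m & 0 <= de c];
  dual_int : forall c m,
    [/\ al m \is a Num.int, be m \is a Num.int, ga c m \is a Num.int & de c \is a Num.int];
  dual_column : {in N, forall m, column F al be ga de m = W m}
}.

Definition attains_dual N F W be de Y : Prop :=
  and_feasible N F Y /\ primal_value N W Y = dual_value N F be de.

Lemma column_set1 c al be ga de m : column [set c] al be ga de m =
  be m - al m + (res c == m)%:R * (\sum_(m' in c) ga c m' - de c) + (m \in c)%:R * (de c - ga c m).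
Proof. by rewrite /column big_set1 addrA. Qed.

Lemma dual_value_set1 N c be de :
  dual_value N [set c] be de = \sum_(m in N) be m + de c * (#|c|%:R - 1).
Proof. by rewrite /dual_value big_set1. Qed.

Lemma and_feasible_set1 N c Y :
  {in N, forall m, 0 <= Y m <= 1} -> {in c, forall m, Y (res c) <= Y m} ->
  \sum_(m in c) Y m - Y (res c) <= #|c|%:R - 1 -> and_feasible N [set c] Y.
Proof. by move=> box le_res sum_le; split=> // c'; rewrite inE => /eqP ->. Qed.

End Certificates.

(** * One star *)

(* The weight of [x] leaves the star: there it becomes [-D], and [D] is added to it in
   the rest of the system ([outer_weight] below). *)
Definition transfer_weight n (x : {set 'I_n}) (W : {set 'I_n} -> rat) (D : rat) m :=
  if m == x then - D else W m.

Record star_transfer n (c : {set {set 'I_n}}) x W (D : rat) al be ga de Y0 Y1 : Prop :=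
  StarTransfer {
  transfer_int : D \is a Num.int;
  transfer_dual : dual_solution (star c) [set c] (transfer_weight x W D) al be ga de;
  transfer_attains0 : attains_dual (star c) [set c] (transfer_weight x W D) be de Y0;
  transfer_attains1 : attains_dual (star c) [set c] (transfer_weight x W D) be de Y1;
  transfer_at0 : Y0 x = 0;
  transfer_at1 : Y1 x = 1
}.

Section RootTransfer.
Variables (n : nat) (c : {set {set 'I_n}}) (W : {set 'I_n} -> rat) (j : {set 'I_n}).
Hypotheses (res_notin : res c \notin c) (jc : j \in c) (jmin : {in c, forall m, W j <= W m}).
Hypothesis W_int : forall m, W m \is a Num.int.

Let d := ppart (W j).
Let D := d - \sum_(m in c) npart (W m - d).
Let be m := if m \in c then ppart (W m - d) else 0.
Let ga (_ : {set {set 'I_n}}) m := npart (W m - d).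
Let de (_ : {set {set 'I_n}}) := d.

Lemma root_transfer_int : D \is a Num.int.
Proof.
by rewrite rpredB ?rpred_sum ?ppart_int // => m _; rewrite npart_int ?rpredB ?ppart_int.
Qed.

Lemma root_dual_solution :
  dual_solution (star c) [set c] (transfer_weight (res c) W D) (fun _ => 0) be ga de.
Proof.
have d_int : d \is a Num.int by apply: ppart_int.
split=> [c' m|c' m|m].
- by rewrite lexx npart_ge0 ppart_ge0 /be; case: ifP => _; rewrite ?ppart_ge0.
- rewrite rpred0 npart_int ?rpredB //; split=> //.
  by rewrite /be; case: ifP => _; rewrite ?ppart_int ?rpredB.
rewrite column_set1 /transfer_weight /be /ga /de in_setU1 => /orP[/eqP ->|mc].
  by rewrite eqxx (negPf res_notin) /D /= mul1r mul0r; ring.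
have res_m : (res c == m) = false by apply: contraNF res_notin => /eqP ->.
rewrite mc res_m eq_sym res_m /= mul0r mul1r.
by have := ppartB_npart (W m - d); lra.
Qed.

Lemma root_dual_value :
  dual_value (star c) [set c] be de = \sum_(m in c) ppart (W m - d) + d * (#|c|%:R - 1).
Proof.
rewrite dual_value_set1 big_setU1 //= /be (negPf res_notin) add0r.
by congr (_ + _); apply: eq_bigr => m ->.
Qed.

Lemma root_attains_zero :
  attains_dual (star c) [set c] (transfer_weight (res c) W D) be de
    (fun m => ((m \in c) && (m != j) && (0 < W m))%:R).
Proof.
split.
  apply: and_feasible_set1 => [m _|m _|]; first by rewrite ler0n lern1 leq_b1.
    by rewrite (negPf res_notin) ler0n.
  rewrite (negPf res_notin) subr0; apply: (sum_le_card_subr1 jc) => [m _|].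
    by rewrite lern1 leq_b1.
  by rewrite eqxx andbF.
rewrite root_dual_value /primal_value big_setU1 //= (negPf res_notin) mulr0 add0r.
rewrite -(sum_pos_off_argmin jc jmin); apply: eq_bigr => m mc.
by rewrite /transfer_weight mc (_ : (m == res c) = false) //; apply: contraNF res_notin => /eqP <-.
Qed.

Lemma root_attains_one :
  attains_dual (star c) [set c] (transfer_weight (res c) W D) be de (fun _ => 1).
Proof.
split.
  by apply: and_feasible_set1 => [m _|m _|]; rewrite ?sumr_const ?lexx ?ler01.
rewrite root_dual_value /primal_value big_setU1 //= /transfer_weight eqxx mulr1.
rewrite (eq_bigr (fun m => ppart (W m - d) - npart (W m - d) + d)) => [|m mc]; last first.
  have -> : (m == res c) = false by apply: contraNF res_notin => /eqP <-.
  by rewrite ppartB_npart mulr1 subrK.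
rewrite big_split sumrB /= sumr_const /D -mulr_natr; ring.
Qed.

Lemma root_star_transfer :
  exists D al be ga de Y0 Y1, star_transfer c (res c) W D al be ga de Y0 Y1.
Proof.
exists D, (fun _ => 0), be, ga, de.
exists (fun m => ((m \in c) && (m != j) && (0 < W m))%:R), (fun _ => 1).
split; [exact: root_transfer_int | exact: root_dual_solution | exact: root_attains_zero |
        exact: root_attains_one | by rewrite (negPf res_notin) | by []].
Qed.

End RootTransfer.

Section MemberTransfer.
Variables (n : nat) (c : {set {set 'I_n}}) (x : {set 'I_n}) (W : {set 'I_n} -> rat).
Variable j : {set 'I_n}.
Local Notation u := (res c).
Local Notation O := (c :\ x).
Hypotheses (res_notin : u \notin c) (xc : x \in c).
Hypotheses (jO : j \in O) (jmin : {in O, forall m, W j <= W m}).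
Hypothesis W_int : forall m, W m \is a Num.int.

(* The multiplier [d] of the sum row is capped by the deficit of the root and by the
   cheapest member other than [x]; [t] is the part of the weight of the root that the
   members do not cover, paid by [ga x] if positive and by [al u] if negative. *)
Let d : rat := Num.min (npart (W u)) (ppart (W j)).
Let Nd : rat := \sum_(m in O) npart (W m - d).
Let t : rat := W u + d - Nd.
Let D : rat := ppart t - d.
Let al m := if m == u then npart t else 0.
Let be m := if m \in O then ppart (W m - d) else 0.
Let ga (_ : {set {set 'I_n}}) m := if m == x then ppart t else npart (W m - d).
Let de (_ : {set {set 'I_n}}) := d.

Let d_int : d \is a Num.int.
Proof. by rewrite /d minEle; case: ifP => _; rewrite ?npart_int ?ppart_int. Qed.

Let t_int : t \is a Num.int.
Proof.
by rewrite /t /Nd rpredB ?rpredD ?d_int ?rpred_sum // => m _; rewrite npart_int ?rpredB ?d_int.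
Qed.

Let d_ge0 : 0 <= d.
Proof. by rewrite /d le_min npart_ge0 ppart_ge0. Qed.

Let d_le : d <= ppart (W j).
Proof. by rewrite /d ge_min lexx orbT. Qed.

Lemma member_level_le : 0 < d -> {in O, forall m, d <= W m}.
Proof.
move=> d_gt0 m mO; have [Wj_ge0|Wj_lt0] := lerP 0 (W j).
  by move: d_le (jmin mO); rewrite ppart_id //; lra.
by move: d_le; rewrite (ppart_npos (ltW Wj_lt0)); lra.
Qed.

Lemma member_level_eq : t < 0 -> d = ppart (W j).
Proof.
move=> t_lt0; apply/eqP; rewrite eq_le d_le /= leNgt; apply/negP => d_lt.
have d_npart : d = npart (W u).
  by move: d_lt; rewrite /d minEle; case: ifP => // _; rewrite ltxx.
have Wj_gt : d < W j.
  have [Wj_ge0|Wj_lt0] := lerP 0 (W j); first by rewrite -(ppart_id Wj_ge0).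
  by move: d_lt d_ge0; rewrite (ppart_npos (ltW Wj_lt0)); lra.
have Nd0 : Nd = 0.
  rewrite /Nd big1 // => m mO; apply: npart_nneg.
  by rewrite subr_ge0 ltW // (lt_le_trans Wj_gt (jmin mO)).
move: t_lt0; rewrite /t Nd0 d_npart.
by have := ppartB_npart (W u); have := ppart_ge0 (W u); lra.
Qed.

Let res_neq m : m \in c -> (m == u) = false.
Proof. by move=> mc; apply: contraNF res_notin => /eqP <-. Qed.

Let x_notin_O : x \notin O.
Proof. by rewrite !inE eqxx. Qed.

Let u_notin_O : u \notin O.
Proof. by rewrite !inE (negPf res_notin) andbF. Qed.

Let O_sub m : m \in O -> m \in c.
Proof. by case/setD1P. Qed.

Let card_c : #|c|%:R - 1 = #|O|%:R :> rat.
Proof. by rewrite (cardsD1 x c) xc add1n -addn1 natrD addrK. Qed.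

Lemma member_transfer_int : D \is a Num.int.
Proof. by rewrite rpredB ?ppart_int. Qed.

Lemma member_dual_solution :
  dual_solution (star c) [set c] (transfer_weight x W D) al be ga de.
Proof.
split=> [c' m|c' m|m].
- rewrite /al /be /ga /de d_ge0; split=> //; case: ifP => _;
    by rewrite ?lexx ?npart_ge0 ?ppart_ge0.
- have Wd_int : W m - d \is a Num.int by rewrite rpredB ?W_int.
  rewrite /al /be /ga /de d_int; split=> //; case: ifP => _; by rewrite ?rpred0
    ?(npart_int t_int) ?(ppart_int t_int) ?(npart_int Wd_int) ?(ppart_int Wd_int).
rewrite column_set1 /transfer_weight in_setU1 => /orP[/eqP ->|mc].
  rewrite eqxx (negPf res_notin) eq_sym res_neq // /al /be eqxx (negPf u_notin_O).
  rewrite (big_setD1 _ xc) /= /ga eqxx.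
  rewrite (eq_bigr (fun m' => npart (W m' - d))) => [|m' /setD1P[/negPf -> //]].
  by rewrite -/Nd /de /= mul1r mul0r addr0; have := ppartB_npart t; rewrite /t; lra.
rewrite eq_sym res_neq // mc /al res_neq // /be /ga /de /= mul0r mul1r addr0 subr0.
case: eqP => [->|/eqP mx]; first by rewrite (negPf x_notin_O) /D; lra.
by rewrite !inE mx mc /=; have := ppartB_npart (W m - d); lra.
Qed.

Lemma member_dual_value :
  dual_value (star c) [set c] be de = \sum_(m in O) ppart (W m - d) + d * #|O|%:R.
Proof.
rewrite dual_value_set1 card_c big_setU1 //= (big_setD1 _ xc) /= /be (negPf u_notin_O).
by rewrite (negPf x_notin_O) !add0r; congr (_ + _); apply: eq_bigr => m ->.
Qed.

Lemma member_attains_zero :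
  attains_dual (star c) [set c] (transfer_weight x W D) be de
    (fun m => ((m \in O) && (0 < W m))%:R).
Proof.
split.
  apply: and_feasible_set1 => [m _|m _|]; first by rewrite ler0n lern1 leq_b1.
    by rewrite (negPf u_notin_O) ler0n.
  rewrite (negPf u_notin_O) subr0; apply: (sum_le_card_subr1 xc) => [m _|].
    by rewrite lern1 leq_b1.
  by rewrite (negPf x_notin_O).
rewrite member_dual_value /primal_value big_setU1 //= (big_setD1 _ xc) /=.
rewrite (negPf u_notin_O) (negPf x_notin_O) !mulr0 !add0r mulr_natr -sumr_const -big_split.
apply: eq_bigr => m mO; rewrite mO /transfer_weight.
case/setD1P: (mO) => /negPf -> _ /=.
have [d0|d_gt0] := eqVneq d 0; first by rewrite d0 subr0 addr0 mulr_ind_gt0.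
have d_pos : 0 < d by rewrite lt_def d_gt0 d_ge0.
have Wm_ge := member_level_le d_pos mO.
by rewrite (lt_le_trans d_pos Wm_ge) mulr1 ppart_id ?subrK // subr_ge0.
Qed.

Lemma member_attains_one_nonneg : 0 <= t ->
  attains_dual (star c) [set c] (transfer_weight x W D) be de (fun _ => 1).
Proof.
move=> t_ge0; split.
  by apply: and_feasible_set1 => [m _|m _|]; rewrite ?sumr_const ?lexx ?ler01.
rewrite member_dual_value /primal_value big_setU1 //= (big_setD1 _ xc) /= /transfer_weight.
rewrite eqxx eq_sym res_neq // !mulr1.
rewrite (eq_bigr (fun m => ppart (W m - d) - npart (W m - d) + d)) => [|m /setD1P[/negPf -> _]].
  by rewrite big_split sumrB /= sumr_const -/Nd /D ppart_id // /t -mulr_natr; ring.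
by rewrite ppartB_npart mulr1 subrK.
Qed.

Lemma member_attains_one_neg : t < 0 ->
  attains_dual (star c) [set c] (transfer_weight x W D) be de
    (fun m => if m == x then 1 else ((m \in O) && (m != j) && (0 < W m))%:R).
Proof.
move=> t_lt0; have jc := O_sub jO; have jx : (j == x) = false by case/setD1P: jO => /negPf.
split.
  apply: and_feasible_set1 => [m _|m _|].
  - by case: ifP => _; rewrite ?ler0n ?lern1 ?leq_b1 ?lexx ?ler01.
    by rewrite eq_sym (res_neq xc) (negPf u_notin_O) /=; case: ifP => _; rewrite ?ler01 ?ler0n.
  rewrite eq_sym res_neq // (negPf u_notin_O) subr0; apply: (sum_le_card_subr1 jc) => [m _|].
    by case: ifP => _; rewrite ?lexx ?lern1 ?leq_b1.
  by rewrite jx eqxx andbF.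
rewrite member_dual_value /primal_value big_setU1 //= (big_setD1 _ xc) /= /transfer_weight.
rewrite eq_sym res_neq // (negPf u_notin_O) mulr0 add0r eqxx mulr1.
rewrite (eq_bigr (fun m => W m * ((m != j) && (0 < W m))%:R)) => [|m mO]; last first.
  by rewrite mO; case/setD1P: mO => /negPf ->.
rewrite (sum_pos_off_argmin jO jmin) -(member_level_eq t_lt0) /D ppart_npos ?ltW //.
by rewrite -card_c; ring.
Qed.

Lemma member_star_transfer : exists D al be ga de Y0 Y1, star_transfer c x W D al be ga de Y0 Y1.
Proof.
exists D, al, be, ga, de, (fun m => ((m \in O) && (0 < W m))%:R).
have [t_ge0|t_lt0] := lerP 0 t.
  exists (fun _ => 1); split; [exact: member_transfer_int | exact: member_dual_solution |
    exact: member_attains_zero | exact: member_attains_one_nonneg |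
    by rewrite (negPf x_notin_O) | by []].
exists (fun m => if m == x then 1 else ((m \in O) && (m != j) && (0 < W m))%:R).
split; [exact: member_transfer_int | exact: member_dual_solution | exact: member_attains_zero |
  exact: member_attains_one_neg | by rewrite (negPf x_notin_O) | by rewrite eqxx].
Qed.

End MemberTransfer.

Lemma star_transfer_exists n (c : {set {set 'I_n}}) x W :
  res c \notin c -> (1 < #|c|)%N -> x \in star c -> (forall m, W m \is a Num.int) ->
  exists D al be ga de Y0 Y1, star_transfer c x W D al be ga de Y0 Y1.
Proof.
move=> res_notin c_gt1 + W_int; case/setU1P => [->|xc].
  have [j jc jmin] : exists2 j, j \in c & {in c, forall m, W j <= W m}.
    by apply: ex_argmin; rewrite -card_gt0 ltnW.
  exact: root_star_transfer res_notin jc jmin W_int.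
have [j jO jmin] : exists2 j, j \in c :\ x & {in c :\ x, forall m, W j <= W m}.
  by apply: ex_argmin; move: c_gt1; rewrite (cardsD1 x c) xc add1n ltnS card_gt0.
exact: member_star_transfer res_notin xc jO jmin W_int.
Qed.

(** * Gluing a star to the rest of the system *)

Definition outer_weight n (c : {set {set 'I_n}}) x W (D : rat) m : rat :=
  if m \in star c then (if m == x then W m + D else 0) else W m.

Section Glue.
Variables (n : nat) (N : {set {set 'I_n}}) (F : {set {set {set 'I_n}}}).
Variables (c : {set {set 'I_n}}) (x : {set 'I_n}) (W : {set 'I_n} -> rat) (D : rat).
Variables (al be Y0 Y1 al2 be2 Y2 : {set 'I_n} -> rat).
Variables (ga ga2 : {set {set 'I_n}} -> {set 'I_n} -> rat) (de de2 : {set {set 'I_n}} -> rat).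
Hypotheses (cN : star c \subset N) (cF : c \notin F) (xs : x \in star c).
Hypothesis private : {in F, forall c', star c :&: star c' \subset [set x]}.
Hypothesis local : star_transfer c x W D al be ga de Y0 Y1.
Hypothesis dual2 : dual_solution N F (outer_weight c x W D) al2 be2 ga2 de2.
Hypothesis attains2 : attains_dual N F (outer_weight c x W D) be2 de2 Y2.

Let glue (f g : {set 'I_n} -> rat) m := f m + (if m \in star c then g m else 0).
Let ga' c' := if c' == c then ga c' else ga2 c'.
Let de' c' := if c' == c then de c' else de2 c'.
Let t := Y2 x.
Let Yc m := (1 - t) * Y0 m + t * Y1 m.
Let Y m := if m \in star c then Yc m else Y2 m.

Lemma glue_column m : column (c |: F) (glue al2 al) (glue be2 be) ga' de' m =
  column F al2 be2 ga2 de2 m + (if m \in star c then column [set c] al be ga de m else 0).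
Proof.
rewrite /column (big_setU1 c cF) /= /ga' /de' eqxx.
rewrite [X in _ + (_ + X)](eq_bigr (fun c' =>
    (res c' == m)%:R * (\sum_(m' in c') ga2 c' m' - de2 c')
    + (m \in c')%:R * (de2 c' - ga2 c' m))) => [|c' c'F]; last first.
  by have -> : (c' == c) = false by apply: contraNF cF => /eqP <-.
rewrite /glue big_set1; case: ifP => ms; first ring.
move/negbT: ms; rewrite in_setU1 negb_or eq_sym => /andP[/negPf -> /negPf ->].
by rewrite /= !mul0r !addr0 add0r.
Qed.

Lemma glue_dual_solution : dual_solution N (c |: F) W (glue al2 al) (glue be2 be) ga' de'.
Proof.
have [ge0 int _] := transfer_dual local; have [ge0_2 int_2 col2] := dual2.
split=> [c' m|c' m|m mN].
- have [? ? ? ?] := ge0 c' m; have [? ? ? ?] := ge0_2 c' m.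
  by rewrite /glue /ga' /de'; case: ifP; case: ifP => _ _; split; rewrite ?addr0 ?addr_ge0.
- have [? ? ? ?] := int c' m; have [? ? ? ?] := int_2 c' m.
  by rewrite /glue /ga' /de'; case: ifP; case: ifP => _ _; split; rewrite ?addr0 ?rpredD.
rewrite glue_column col2 //; case: ifP => ms; last by rewrite /outer_weight ms addr0.
rewrite (dual_column (transfer_dual local)) // /outer_weight /transfer_weight ms.
by case: eqP => _; ring.
Qed.

Lemma glue_dual_value : dual_value N (c |: F) (glue be2 be) de' =
  dual_value N F be2 de2 + dual_value (star c) [set c] be de.
Proof.
rewrite /dual_value big_split /= sum_restrict // (big_setU1 c cF) big_set1 /= /de' eqxx.
rewrite (eq_bigr (fun c' => de2 c' * (#|c'|%:R - 1))) => [|c' c'F]; first ring.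
by have -> : (c' == c) = false by apply: contraNF cF => /eqP <-.
Qed.

Let t01 : 0 <= t <= 1.
Proof. by case: attains2 => [[box _] _]; apply: box; apply: subsetP cN _ xs. Qed.

Let Yc_x : Yc x = t.
Proof. by rewrite /Yc (transfer_at0 local) (transfer_at1 local); ring. Qed.

Lemma glue_feasible : and_feasible N (c |: F) Y.
Proof.
have [[box0 cons0] _] := transfer_attains0 local; have [[box1 cons1] _] := transfer_attains1 local.
have [[box2 cons2] _] := attains2.
split=> [m mN|c'].
  rewrite /Y; case: ifP => ms; last exact: box2.
  by apply: (convex_01 t01); [apply: box0 | apply: box1].
have us : res c \in star c by rewrite setU11.
have cs m : m \in c -> m \in star c by move=> mc; rewrite setU1r.
rewrite in_setU1 => /orP[/eqP ->|c'F].
  have [le0 sum0] := cons0 c (set11 c); have [le1 sum1] := cons1 c (set11 c).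
  split=> [m mc|]; first by rewrite /Y us cs //; apply: (convex_le t01); [apply: le0 | apply: le1].
  rewrite /Y us (eq_bigr Yc) => [|m /cs -> //]; rewrite /Yc big_split /= -!mulr_sumr.
  by have := convex_le t01 sum0 sum1; lra.
have Y2_on m : m \in star c' -> Y m = Y2 m.
  move=> mc'; rewrite /Y; case: ifP => // ms.
  have /set1P -> : m \in [set x] by apply: subsetP (private c'F) _ _; rewrite inE ms.
  by rewrite Yc_x.
have [le2 sum2] := cons2 c' c'F.
split=> [m mc'|]; first by rewrite !Y2_on ?setU11 ?setU1r //; apply: le2.
by rewrite Y2_on ?setU11 // (eq_bigr Y2) => [|m mc']; [apply: sum2 | apply: Y2_on; rewrite setU1r].
Qed.

Lemma glue_primal_value : primal_value N W Y =
  primal_value N (outer_weight c x W D) Y2 + primal_value (star c) (transfer_weight x W D) Yc.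
Proof.
rewrite /primal_value -(sum_restrict _ cN) -big_split /=; apply: eq_bigr => m _.
rewrite /Y /outer_weight /transfer_weight; case: ifP => _; last by rewrite addr0.
by case: eqP => [->|_]; [rewrite Yc_x /t | rewrite mul0r add0r]; ring.
Qed.

Lemma glue_attains : attains_dual N (c |: F) W (glue be2 be) de' Y.
Proof.
split; first exact: glue_feasible.
have [_ val0] := transfer_attains0 local; have [_ val1] := transfer_attains1 local.
rewrite glue_primal_value glue_dual_value attains2.2; congr (_ + _).
rewrite /primal_value (eq_bigr (fun m => (1 - t) * (transfer_weight x W D m * Y0 m) +
  t * (transfer_weight x W D m * Y1 m))) => [|m _]; last by rewrite /Yc; ring.
rewrite big_split /= -!mulr_sumr -/(primal_value _ _ Y0) -/(primal_value _ _ Y1).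
by rewrite val0 val1; ring.
Qed.

Lemma glue_certificates : exists al' be' ga' de' Y',
  dual_solution N (c |: F) W al' be' ga' de' /\ attains_dual N (c |: F) W be' de' Y'.
Proof.
exists (glue al2 al), (glue be2 be), ga', de', Y.
by split; [apply: glue_dual_solution | apply: glue_attains].
Qed.

End Glue.

Section Induction.
Variables (n : nat) (M : {set {set 'I_n}}) (C : {set {set {set 'I_n}}}).
Hypotheses (HL : is_linearization M C) (HC : consistent M C) (HS : simple_lin M C)
  (HA : acyclicG M C).

Lemma certificate_set0 (W : {set 'I_n} -> rat) : (forall m, W m \is a Num.int) ->
  exists al be ga de Y, dual_solution M set0 W al be ga de /\ attains_dual M set0 W be de Y.
Proof.
move=> W_int; exists (fun m => npart (W m)), (fun m => ppart (W m)), (fun _ _ => 0), (fun _ => 0).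
exists (fun m => ((0 < W m)%R : bool)%:R); split; [split|split; first split].
- by move=> c m; rewrite npart_ge0 ppart_ge0 lexx.
- by move=> c m; rewrite npart_int ?ppart_int ?rpred0.
- by move=> m _; rewrite /column big_set0 addr0 ppartB_npart.
- by move=> m _; rewrite ler0n lern1 leq_b1.
- by move=> c; rewrite inE.
by rewrite /primal_value /dual_value big_set0 addr0; apply: eq_bigr => m _; rewrite mulr_ind_gt0.
Qed.

Lemma certificate_exists (F : {set {set {set 'I_n}}}) : F \subset C ->
  forall W : {set 'I_n} -> rat, (forall m, W m \is a Num.int) ->
  exists al be ga de Y, dual_solution M F W al be ga de /\ attains_dual M F W be de Y.
Proof.
elim: {F}_.+1 {-2}F (ltnSn #|F|) => // k IH F F_lt sFC W W_int.
have [->|F0] := eqVneq F set0; first exact: certificate_set0.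
have [c [x [cF xs private]]] := leaf_constraint HL HC HS HA sFC F0.
have cC := subsetP sFC _ cF.
have [D [al [be [ga [de [Y0 [Y1 local]]]]]]] :=
  star_transfer_exists (resultant_notin HC HS cC) (card_constraint_gt1 HL HC HS cC) xs W_int.
have W2_int m : outer_weight c x W D m \is a Num.int.
  rewrite /outer_weight; case: ifP => _ //.
  by case: ifP => _; rewrite ?rpredD ?rpred0 ?(transfer_int local).
have Fc_lt : (#|F :\ c| < k)%N by move: F_lt; rewrite (cardsD1 c F) cF.
have [al2 [be2 [ga2 [de2 [Y2 [dual2 attains2]]]]]] :=
  IH (F :\ c) Fc_lt (subset_trans (subD1set F c) sFC) _ W2_int.
rewrite -(setD1K cF).
apply: (glue_certificates (star_sub HL cC) (negbT (setD11 c F)) xs _ local dual2 attains2).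
by move=> c' /setD1P[c'c c'F]; apply: private.
Qed.

End Induction.

(** * Linear programming duality and the system of the statement *)

Section Duality.
Variables (V I : finType) (a : I -> V -> rat) (b : I -> rat).
Implicit Types (u w y : V -> rat).

Lemma weak_duality w y mu :
  lp_feasible a b y -> dual_feasible a w mu -> dotp w y <= dual_obj b mu.
Proof.
move=> y_feas [mu_ge0 mu_a]; rewrite /dotp /dual_obj.
rewrite (eq_bigr (fun v => \sum_(i : I) mu i * a i v * y v)) => [|v _]; last first.
  by rewrite -mu_a mulr_suml.
rewrite exchange_big /=; apply: ler_sum => i _.
rewrite (eq_bigr (fun v => mu i * (a i v * y v))) => [|v _]; last by rewrite mulrA.
by rewrite -mulr_sumr mulrC; apply: ler_wpM2r; [apply: mu_ge0 | apply: y_feas].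
Qed.

Lemma dotpN u y : dotp (fun v => - u v) y = - dotp u y.
Proof. by rewrite /dotp -sumrN; apply: eq_bigr => v _; rewrite mulNr. Qed.

Lemma dotpB u (u' : V -> rat) y : dotp (fun v => u v - u' v) y = dotp u y - dotp u' y.
Proof. by rewrite /dotp -sumrB; apply: eq_bigr => v _; rewrite mulrBl. Qed.

Lemma dotp_sum (T : finType) (A : pred T) (U : T -> V -> rat) y :
  dotp (fun v => \sum_(m in A) U m v) y = \sum_(m in A) dotp (U m) y.
Proof.
rewrite /dotp (eq_bigr (fun v => \sum_(m in A) U m v * y v)) => [|v _]; last by rewrite mulr_suml.
exact: exchange_big.
Qed.

Lemma TDI_strong_duality :
  (forall w, (forall v, w v \is a Num.int) -> exists lam y,
     [/\ dual_feasible a w lam, forall i, lam i \is a Num.int, lp_feasible a b y &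
         dotp w y = dual_obj b lam]) ->
  TDI a b.
Proof.
move=> strong w w_int _; have [lam [y [lam_feas lam_int y_feas opt]]] := strong w w_int.
by exists lam; split=> // mu mu_feas; rewrite -opt weak_duality.
Qed.

End Duality.

Section System.
Variables (n : nat) (M : {set {set 'I_n}}) (C : {set {set {set 'I_n}}}).
Hypothesis HL : is_linearization M C.

Lemma dotp_ind (Y : {set 'I_n} -> rat) m :
  m \in M -> dotp (fun v => ind v m) (fun v : varT M => Y (val v)) = Y m.
Proof.
move=> mM; rewrite /dotp (bigD1 (Sub m mM)) //= /ind SubK eqxx mul1r big1 ?addr0 // => v nv.
rewrite (_ : (val v == m) = false) ?mul0r //; apply: contraNF nv => /eqP vm.
by apply/eqP/val_inj; rewrite SubK.
Qed.

Lemma sys_feasible Y :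
  and_feasible M C Y -> lp_feasible (@sys_a n M C) (@sys_b n M C) (fun v => Y (val v)).
Proof.
case=> box cons [[v|v]|[[[c m] cm]|[c cC]]] /=.
- by rewrite dotpN dotp_ind ?(valP v) // oppr_le0; case/andP: (box _ (valP v)).
- by rewrite dotp_ind ?(valP v) //; case/andP: (box _ (valP v)).
- case/andP: (cm) => /= cC mc.
  rewrite dotpB !dotp_ind ?(resultant_in HL cC) ?(subsetP (constraint_sub HL cC)) // subr_le0.
  exact: (cons c cC).1.
rewrite dotpB dotp_sum dotp_ind ?(resultant_in HL cC) //.
rewrite (eq_bigr Y) => [|m mc]; first exact: (cons c cC).2.
by rewrite dotp_ind // (subsetP (constraint_sub HL cC)).
Qed.

Definition lift_dual (al be : {set 'I_n} -> rat) (ga : {set {set 'I_n}} -> {set 'I_n} -> rat)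
  (de : {set {set 'I_n}} -> rat) (r : rowT M C) : rat :=
  match r with
  | inl (inl v) => al (val v)
  | inl (inr v) => be (val v)
  | inr (inl p) => ga (val p).1 (val p).2
  | inr (inr c) => de (val c)
  end.

Lemma sum_ind (f : {set 'I_n} -> rat) (v : varT M) :
  \sum_(v' : varT M) f (val v') * ind v (val v') = f (val v).
Proof.
rewrite (bigD1 v) //= /ind eqxx mulr1 big1 ?addr0 // => v' v'v.
by rewrite (_ : (val v == val v') = false) ?mulr0 //; apply: contraNF v'v => /eqP/val_inj ->.
Qed.

Lemma sum_eq_ind (c : {set {set 'I_n}}) (f : {set 'I_n} -> rat) m :
  \sum_(m' in c) f m' * (m == m')%:R = (m \in c)%:R * f m.
Proof.
case mc: (m \in c); last first.
  by rewrite mul0r big1 // => m' m'c; rewrite (_ : (m == m') = false) ?mulr0 //;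
    apply: contraFF mc => /eqP ->.
rewrite (bigD1 m mc) /= eqxx mulr1 mul1r big1 ?addr0 // => m' /andP[_ m'm].
by rewrite eq_sym (negPf m'm) mulr0.
Qed.

Lemma lift_dual_column al be ga de v :
  \sum_(r : rowT M C) lift_dual al be ga de r * sys_a r v = column C al be ga de (val v).
Proof.
rewrite !big_sumType /= /column.
rewrite (eq_bigr (fun v' => - (al (val v') * ind v (val v')))) => [|v' _]; last by rewrite mulrN.
rewrite sumrN !sum_ind.
have -> : \sum_(p : pairT C) ga (val p).1 (val p).2 * (ind v (res (val p).1) - ind v (val p).2) =
    \sum_(c in C) ((val v == res c)%:R * \sum_(m in c) ga c m - (val v \in c)%:R * ga c (val v)).
  rewrite (sum_sig (fun p : {set {set 'I_n}} * {set 'I_n} => (p.1 \in C) && (p.2 \in p.1))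
    (fun p => ga p.1 p.2 * (ind v (res p.1) - ind v p.2))).
  rewrite -(pair_big_dep (fun c => c \in C) (fun c m => m \in c)
    (fun c m => ga c m * (ind v (res c) - ind v m))) /=.
  apply: eq_bigr => c _; rewrite -sum_eq_ind mulr_sumr -sumrB.
  by apply: eq_bigr => m _; rewrite /ind; ring.
have -> : \sum_(c : consT C) de (val c) * ((\sum_(m in val c) ind v m) - ind v (res (val c))) =
    \sum_(c in C) de c * ((val v \in c)%:R - (val v == res c)%:R).
  rewrite (sum_sig (fun c => c \in C) (fun c => de c * ((\sum_(m in c) ind v m) - ind v (res c)))).
  apply: eq_bigr => c _; congr (_ * (_ - _)).
  have := sum_eq_ind c (fun _ => 1) (val v); rewrite /= mulr1 => <-.
  by apply: eq_bigr => m _; rewrite mul1r.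
rewrite -big_split /=; congr (_ + _); first ring.
by apply: eq_bigr => c _; rewrite eq_sym; ring.
Qed.

Lemma lift_dual_obj al be ga de :
  dual_obj (@sys_b n M C) (lift_dual al be ga de) = dual_value M C be de.
Proof.
rewrite /dual_obj !big_sumType /= big1 ?add0r => [|v _]; last by rewrite mul0r.
rewrite [X in _ + (X + _)]big1 ?add0r => [|p _]; last by rewrite mul0r.
rewrite (eq_bigr (fun v => be (val v))) => [|v _]; last by rewrite mul1r.
rewrite (sum_sig (fun m => m \in M) be) /dual_value; congr (_ + _).
rewrite -(sum_sig (fun c => c \in C) (fun c => de c * (#|c|%:R - 1))).
by apply: eq_bigr => c _; rewrite mulrC.
Qed.

Definition extend_weight (w : varT M -> rat) (m : {set 'I_n}) : rat := oapp w 0 (insub m).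

Lemma extend_weightE w (v : varT M) : extend_weight w (val v) = w v.
Proof. by rewrite /extend_weight valK. Qed.

Lemma extend_weight_int w :
  (forall v, w v \is a Num.int) -> forall m, extend_weight w m \is a Num.int.
Proof. by move=> w_int m; rewrite /extend_weight; case: insub. Qed.

Lemma dotp_extend_weight w Y :
  dotp w (fun v : varT M => Y (val v)) = primal_value M (extend_weight w) Y.
Proof.
rewrite /primal_value -(sum_sig (fun m => m \in M) (fun m => extend_weight w m * Y m)).
by apply: eq_bigr => v _; rewrite extend_weightE.
Qed.

Lemma lift_dual_feasible w al be ga de :
  dual_solution M C (extend_weight w) al be ga de ->
  dual_feasible (@sys_a n M C) w (lift_dual al be ga de).
Proof.
case=> ge0 _ col; split=> [[[v|v]|[p|c]]|v] /=.
- by case: (ge0 set0 (val v)).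
- by case: (ge0 set0 (val v)).
- by case: (ge0 (val p).1 (val p).2).
- by case: (ge0 (val c) set0).
by rewrite lift_dual_column col ?extend_weightE // (valP v).
Qed.

Lemma lift_dual_int al be ga de : (forall c m,
    [/\ al m \is a Num.int, be m \is a Num.int, ga c m \is a Num.int & de c \is a Num.int]) ->
  forall r, lift_dual al be ga de r \is a Num.int.
Proof.
move=> int [[v|v]|[p|c]] /=.
- by case: (int set0 (val v)).
- by case: (int set0 (val v)).
- by case: (int (val p).1 (val p).2).
- by case: (int (val c) set0).
Qed.

End System.

Theorem lemma3p10 (n : nat) (M : {set {set 'I_n}}) (C : {set {set {set 'I_n}}}) :
  is_linearization M C -> consistent M C -> simple_lin M C -> acyclicG M C ->
  TDI (@sys_a n M C) (@sys_b n M C).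
Proof.
move=> HL HC HS HA; apply: TDI_strong_duality => w w_int.
have [al [be [ga [de [Y [dual [feas opt]]]]]]] :=
  certificate_exists HL HC HS HA (subxx C) (extend_weight_int w_int).
exists (lift_dual al be ga de), (fun v : varT M => Y (val v)); split.
- exact: lift_dual_feasible dual.
- exact: lift_dual_int (dual_int dual).
- exact (sys_feasible HL feas).
by rewrite dotp_extend_weight opt lift_dual_obj.
Qed.
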